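(* Assume $M$ is projective in $\sigma[M]$ and $M$ is an Artinian $R$-module. Then either $P(M)=M$, or there exist finitely many primitive $M$-ideals $P_1,\dots,P_n$ of $M$ with $P(M)=\bigcap_{i=1}^n P_i$.
   Context: $R$ is a ring with identity, modules are unital left $R$-modules, $M$ is a fixed left $R$-module; $\sigma[M]$ is the full subcategory of $R$-modules isomorphic to submodules of $M$-generated modules. $\mathrm{Ann}_M(X):=\bigcap_{f\in\mathrm{Hom}_R(M,X)}\ker f$. A submodule $N\le M$ is an $M$-ideal if $N$ is the intersection of the kernels of all homomorphisms from $M$ into modules of some class $\mathcal C$. For $N\le M$ and a module $X$, $N\cdot X$ is the intersection of the kernels of all homomorphisms $X\to W$ where $W$ ranges over modules with $f(N)=0$ for all $f\in\mathrm{Hom}_R(M,W)$ (for $Y\le X$, $N\cdot Y$ is formed regarding $Y$ as a module). A module $X\ne0$ is $M$-prime if for all $N\le M$, $Y\le X$, $N\cdot Y=0$ implies $N\cdot X=0$ or $Y=0$. A proper $M$-ideal $P$ is a prime $M$-ideal if $P=\mathrm{Ann}_M(X)$ for some $M$-prime module $X$. An $M$-ideal $P$ is primitive if $P=\mathrm{Ann}_M(S)$ for some simple module $S$. $P(M)$ is the intersection of all prime $M$-ideals of $M$ ($P(M)=M$ if there are none). *)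

From HB Require Import structures.
From mathcomp Require Import all_boot all_order all_algebra.
Set Implicit Arguments. Unset Strict Implicit. Unset Printing Implicit Defensive.
Import GRing.Theory.
Local Open Scope ring_scope.

Section ModuleTheory.
Variable R : pzRingType.

Definition submodule (X : lmodType R) (N : X -> Prop) : Prop :=
  [/\ N 0, (forall x y, N x -> N y -> N (x + y)) & (forall (a : R) x, N x -> N (a *: x))].

Definition trivial_mod (X : lmodType R) : Prop := forall x : X, x = 0.

Definition simple_mod (S : lmodType R) : Prop :=
  ~ trivial_mod S /\
  forall N : S -> Prop, submodule N ->
    (forall x, N x -> x = 0) \/ (forall x, N x).

(* X is M-generated: X = Tr(M, X), i.e. every element is a finite sum of
   images of homomorphisms M -> X (equivalently X is an epimorphic image of a
   direct sum of copies of M). *)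
Definition M_generated (M X : lmodType R) : Prop :=
  forall x : X, exists (k : nat) (f : 'I_k -> {linear M -> X}) (m : 'I_k -> M),
    x = \sum_(i < k) f i (m i).

(* sigma[M]: modules isomorphic to submodules of M-generated modules. *)
Definition in_sigma (M X : lmodType R) : Prop :=
  exists (Y : lmodType R) (i : {linear X -> Y}), M_generated M Y /\ injective i.

Definition projective_in_sigma (M : lmodType R) : Prop :=
  forall (A B : lmodType R) (g : {linear A -> B}) (f : {linear M -> B}),
    in_sigma M A -> in_sigma M B -> (forall b, exists a, g a = b) ->
    exists h : {linear M -> A}, forall m, g (h m) = f m.

Definition artinian (M : lmodType R) : Prop :=
  forall N : nat -> M -> Prop,
    (forall n, submodule (N n)) ->
    (forall n x, N n.+1 x -> N n x) ->
    exists n, forall k, (n <= k)%N -> forall x, N k x <-> N n x.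

Definition AnnM (M X : lmodType R) : M -> Prop :=
  fun m => forall f : {linear M -> X}, f m = 0.

Definition M_ideal (M : lmodType R) (N : M -> Prop) : Prop :=
  exists C : lmodType R -> Prop,
    forall m, N m <-> (forall (W : lmodType R), C W -> forall f : {linear M -> W}, f m = 0).

Definition prodM (M : lmodType R) (N : M -> Prop) (X : lmodType R) : X -> Prop :=
  fun x => forall W : lmodType R,
    (forall f : {linear M -> W}, forall n, N n -> f n = 0) ->
    forall g : {linear X -> W}, g x = 0.

(* M-prime module.  Submodules Y <= X are represented (up to isomorphism) by
   modules Y with an injective linear map into X; N.Y is computed regarding Y
   as a module. *)
Definition M_prime (M X : lmodType R) : Prop :=
  ~ trivial_mod X /\
  forall (N : M -> Prop) (Y : lmodType R) (i : {linear Y -> X}),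
    submodule N -> injective i ->
    (forall y : Y, prodM N y -> y = 0) ->
    (forall x : X, prodM N x -> x = 0) \/ trivial_mod Y.

Definition prime_M_ideal (M : lmodType R) (P : M -> Prop) : Prop :=
  [/\ M_ideal P, (exists m, ~ P m) &
      exists X : lmodType R, M_prime M X /\ forall m, P m <-> AnnM X m].

Definition primitive_M_ideal (M : lmodType R) (P : M -> Prop) : Prop :=
  M_ideal P /\ exists S : lmodType R, simple_mod S /\ forall m, P m <-> AnnM S m.

(* P(M): intersection of all prime M-ideals (= M if there are none). *)
Definition PM (M : lmodType R) : M -> Prop :=
  fun m => forall P : M -> Prop, prime_M_ideal P -> P m.

End ModuleTheory.

From HB Require Import structures.
From mathcomp Require Import all_boot all_order all_algebra.
From Stdlib Require Import ClassicalEpsilon Classical.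
Set Implicit Arguments. Unset Strict Implicit. Unset Printing Implicit Defensive.
Import GRing.Theory.
Local Open Scope ring_scope.

(* Let rad(M) be the intersection of the annihilators Ann_M(S)
   over all simple modules S.  For an Artinian M we show P(M) = rad(M):
   - every simple module is M-prime, so each proper Ann_M(S) is a prime
     M-ideal and P(M) is contained in rad(M);
   - if X is M-prime and some f : M -> X is nonzero, the image under f of a
     submodule of M minimal with nonzero image is a simple submodule Y of X;
     rad(M).Y = 0, so M-primeness gives rad(M).X = 0, i.e. rad(M) lies in
     Ann_M(X).  Hence rad(M) lies in every prime M-ideal. *)

Section Submodules.
Variable R : pzRingType.

Lemma submodule_ext (X : lmodType R) (N N' : X -> Prop) :
  (forall x, N x <-> N' x) -> submodule N -> submodule N'.
Proof.
move=> NE [N0 ND NZ]; split.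
- exact/NE.
- by move=> x y /NE Nx /NE Ny; apply/NE; apply: ND.
- by move=> a x /NE Nx; apply/NE; apply: NZ.
Qed.

Lemma submodule_meet (X : lmodType R) (I : Type) (N : I -> X -> Prop) :
  (forall i, submodule (N i)) -> submodule (fun x => forall i, N i x).
Proof.
move=> sN; split.
- by move=> i; case: (sN i).
- by move=> x y Nx Ny i; case: (sN i) => _ ND _; apply: ND.
- by move=> a x Nx i; case: (sN i) => _ _ NZ; apply: NZ.
Qed.

Lemma submoduleI (X : lmodType R) (N N' : X -> Prop) :
  submodule N -> submodule N' -> submodule (fun x => N x /\ N' x).
Proof.
case=> N0 ND NZ [N'0 N'D N'Z]; split=> [//|x y [Nx N'x] [Ny N'y]|a x [Nx N'x]].
- by split; [apply: ND | apply: N'D].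
- by split; [apply: NZ | apply: N'Z].
Qed.

Lemma submodule_impl (X : lmodType R) (P : Prop) (N : X -> Prop) :
  submodule N -> submodule (fun x => P -> N x).
Proof.
case=> N0 ND NZ; split=> [_ //|x y Nx Ny p|a x Nx p]; [apply: ND | apply: NZ]; auto.
Qed.

Lemma image_submodule (X Y : lmodType R) (g : {linear X -> Y}) (N : X -> Prop) :
  submodule N -> submodule (fun y => exists x, N x /\ g x = y).
Proof.
case=> N0 ND NZ; split.
- by exists 0; rewrite linear0.
- by move=> _ _ [x [Nx <-]] [y [Ny <-]]; exists (x + y); rewrite linearD; split; auto.
- by move=> a _ [x [Nx <-]]; exists (a *: x); rewrite linearZ; split; auto.
Qed.

Lemma preimage_submodule (X Y : lmodType R) (g : {linear X -> Y}) (N : Y -> Prop) :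
  submodule N -> submodule (fun x => N (g x)).
Proof.
case=> N0 ND NZ; split; first by rewrite linear0.
- by move=> x y Nx Ny; rewrite linearD; apply: ND.
- by move=> a x Nx; rewrite linearZ; apply: NZ.
Qed.

Lemma AnnM_submodule (M X : lmodType R) : submodule (@AnnM R M X).
Proof.
split.
- by move=> f; rewrite linear0.
- by move=> x y Ax Ay f; rewrite linearD Ax Ay addr0.
- by move=> a x Ax f; rewrite linearZ /= Ax scaler0.
Qed.

End Submodules.

Section SubmoduleType.
Variables (R : pzRingType) (X : lmodType R) (L : X -> Prop) (sL : submodule L).

Definition in_sub : {pred X} :=
  fun x => if excluded_middle_informative (L x) then true else false.

Lemma in_subP x : reflect (L x) (in_sub x).
Proof. by rewrite /in_sub; case: excluded_middle_informative => h; constructor. Qed.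

Lemma in_sub_closed : subsemimod_closed in_sub.
Proof.
case: sL => L0 LD LZ; split; first split.
- exact/in_subP.
- by move=> x y /in_subP Lx /in_subP Ly; apply/in_subP; apply: LD.
- by move=> a x /in_subP Lx; apply/in_subP; apply: LZ.
Qed.

HB.instance Definition _ := GRing.isSubmodClosed.Build R X in_sub in_sub_closed.

(* The type mentions the closure proof so that its module structure, which
   depends on that proof, can be found by type inference. *)
Definition sub_lmod (_ : submodule L) := {x : X | in_sub x}.
HB.instance Definition _ := [isSub for (@sval X in_sub) : sub_lmod sL -> X].
HB.instance Definition _ := [Choice of sub_lmod sL by <:].
HB.instance Definition _ := [SubChoice_isSubLmodule of sub_lmod sL by <:].

Definition sub_incl : {linear sub_lmod sL -> X} := val.

Lemma sub_incl_inj : injective sub_incl.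
Proof. exact: val_inj. Qed.

Lemma sub_inclP (y : sub_lmod sL) : L (sub_incl y).
Proof. exact/in_subP/(valP y). Qed.

Lemma sub_incl_onto x : L x -> exists y : sub_lmod sL, sub_incl y = x.
Proof. by move=> /in_subP Lx; exists (exist _ x Lx). Qed.

End SubmoduleType.

Section LinearInverse.
Variables (R : pzRingType) (A B : lmodType R) (g : {linear A -> B}).
Hypotheses (g_inj : injective g) (g_onto : forall b, exists a, g a = b).

Definition lin_inv (b : B) : A :=
  proj1_sig (constructive_indefinite_description _ (g_onto b)).

Lemma lin_invK b : g (lin_inv b) = b.
Proof. exact: proj2_sig (constructive_indefinite_description _ (g_onto b)). Qed.

Lemma lin_inv_linear : linear lin_inv.
Proof. by move=> a x y; apply: g_inj; rewrite linearP !lin_invK. Qed.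

HB.instance Definition _ := GRing.isLinear.Build R B A *:%R lin_inv lin_inv_linear.

End LinearInverse.

Section Radical.
Variables (R : pzRingType) (M : lmodType R).

Lemma artinian_minimal (Phi : (M -> Prop) -> Prop) Q0 : artinian M ->
  (forall Q, Phi Q -> submodule Q) -> Phi Q0 ->
  exists Q, Phi Q /\
    forall Q', Phi Q' -> (forall m, Q' m -> Q m) -> forall m, Q m -> Q' m.
Proof.
move=> art sPhi PQ0; apply: NNPP => no_min.
pose smaller (Q Q' : M -> Prop) :=
  [/\ Phi Q', forall m, Q' m -> Q m & exists m, Q m /\ ~ Q' m].
have descend Q : Phi Q -> exists Q', smaller Q Q'.
  move=> PQ; apply: NNPP => none; apply: no_min; exists Q; split=> // Q' PQ' sQ' m Qm.
  by apply: NNPP => Q'm; apply: none; exists Q'; split=> //; exists m.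
pose next Q := epsilon (inhabits Q0) (smaller Q).
have nextP Q : Phi Q -> smaller Q (next Q).
  by move=> PQ; apply: epsilon_spec; apply: descend.
pose chain k := iter k next Q0.
have chainP k : Phi (chain k) by elim: k => //= k IH; case: (nextP _ IH).
have [n stable] := art chain (fun k => sPhi _ (chainP k))
                       (fun k => let: And3 _ s _ := nextP _ (chainP k) in s).
have [_ _ [m [Cm notCm]]] := nextP _ (chainP n).
by apply: notCm; apply: (stable n.+1 (leqnSn n) m).2.
Qed.

Lemma prodM_img (N : M -> Prop) (Z : lmodType R) (f : {linear M -> Z}) n :
  N n -> prodM N (f n).
Proof. by move=> Nn W killN g; apply: (killN (g \o f) n Nn). Qed.

Lemma simple_M_prime (S : lmodType R) : simple_mod S -> M_prime M S.
Proof.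
move=> [ntS simS]; split=> // N Y i _ i_inj NY0.
case: (classic (trivial_mod Y)) => [|ntY]; [by right | left].
have i_onto : forall s, exists y, i y = s.
  have sY : submodule (fun _ : Y => True) by split.
  case: (simS _ (image_submodule i sY)) => [img0|img_all s]; last first.
    by have [y [_ <-]] := img_all s; exists y.
  exfalso; apply: ntY => y; apply: i_inj; rewrite linear0; apply: img0.
  by exists y.
have NY_kill (f : {linear M -> Y}) n : N n -> f n = 0.
  by move=> Nn; apply/NY0/prodM_img.
move=> s Ns.
have inv_s0 : lin_inv i_onto s = 0.
  exact: (Ns Y NY_kill (lin_inv i_onto : {linear S -> Y})).
by rewrite -(lin_invK i_onto s) inv_s0 linear0.
Qed.

(* Ann_M(S) is an M-ideal, cut out by the one-member class {S}. *)
Lemma AnnM_M_ideal (S : lmodType R) : M_ideal (@AnnM R M S).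
Proof.
exists (fun W => W = S) => m; split; first by move=> Am W ->.
by move=> kill f; apply: kill.
Qed.

Lemma AnnM_primitive (S : lmodType R) : simple_mod S -> primitive_M_ideal (@AnnM R M S).
Proof. by move=> simS; split; [apply: AnnM_M_ideal | exists S]. Qed.

Lemma AnnM_simple_prime (S : lmodType R) :
  simple_mod S -> (exists m : M, ~ AnnM S m) -> prime_M_ideal (@AnnM R M S).
Proof.
move=> simS proper; split=> //; first exact: AnnM_M_ideal.
by exists S; split=> //; apply: simple_M_prime.
Qed.

Definition simple_radical : M -> Prop :=
  fun m => forall S : lmodType R, simple_mod S -> AnnM S m.

Lemma simple_radical_submodule : submodule simple_radical.
Proof.
apply: (@submodule_meet _ _ _ (fun S m => simple_mod S -> AnnM S m)) => S.
exact/submodule_impl/AnnM_submodule.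
Qed.

Lemma PM_sub_radical m : PM m -> simple_radical m.
Proof.
move=> PMm S simS; case: (classic (AnnM S m)) => // notAm.
by apply: (PMm (AnnM S)); apply: AnnM_simple_prime; last exists m.
Qed.

Lemma minimal_image_simple (X : lmodType R) (f : {linear M -> X}) K
    (sK : submodule K) :
  (exists k, K k /\ f k <> 0) ->
  (forall K', submodule K' -> (exists k, K' k /\ f k <> 0) ->
     (forall k, K' k -> K k) -> forall k, K k -> K' k) ->
  simple_mod (sub_lmod (image_submodule f sK)).
Proof.
move=> [k0 [Kk0 fk0]] minK; set sL := image_submodule f sK.
split.
  move=> triv; have [y0 ey0] := sub_incl_onto sL (ex_intro _ k0 (conj Kk0 erefl)).
  by apply: fk0; rewrite -ey0 (triv y0) linear0.
move=> N sN; case: (classic (forall y, N y -> y = 0)) => [|nonzero]; [by left | right].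
have [y1 [Ny1 y1_neq0]] : exists y1, N y1 /\ y1 <> 0.
  apply: NNPP => none; apply: nonzero => y Ny; apply: NNPP => y_neq0.
  by apply: none; exists y.
pose K' k := K k /\ exists y, N y /\ sub_incl sL y = f k.
have sK' : submodule K'.
  apply: (submoduleI sK).
  exact: (preimage_submodule f (image_submodule (sub_incl sL) sN)).
have [k1 [Kk1 e1]] := sub_inclP y1.
have K'k1 : K' k1 by split=> //; exists y1.
have fk1 : f k1 <> 0.
  by rewrite e1 => h; apply: y1_neq0; apply: sub_incl_inj; rewrite h linear0.
have KK' := minK K' sK' (ex_intro _ k1 (conj K'k1 fk1)) (fun k h => h.1).
move=> y; have [k [Kk ek]] := sub_inclP y.
have [_ [y' [Ny' ey']]] := KK' k Kk.
by have -> : y = y' by apply: sub_incl_inj; rewrite ey' ek.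
Qed.

Lemma artinian_simple_sub (X : lmodType R) (f : {linear M -> X}) m1 :
  artinian M -> f m1 <> 0 ->
  exists (Y : lmodType R) (i : {linear Y -> X}), injective i /\ simple_mod Y.
Proof.
move=> art fm1.
pose Phi (K : M -> Prop) := submodule K /\ exists k, K k /\ f k <> 0.
have PhiT : Phi (fun _ => True) by split; [split | exists m1].
have [K [[sK nzK] minK]] := artinian_minimal art (fun K (h : Phi K) => h.1) PhiT.
exists (sub_lmod (image_submodule f sK)), (sub_incl _); split.
  exact: sub_incl_inj.
by apply: minimal_image_simple => // K' sK' nzK'; apply: (minK K').
Qed.

Lemma M_prime_radical (X Y : lmodType R) (i : {linear Y -> X}) :
  M_prime M X -> injective i -> simple_mod Y ->
  forall m, simple_radical m -> AnnM X m.
Proof.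
move=> [_ primeX] i_inj simY m radm f.
have radY0 (y : Y) : prodM simple_radical y -> y = 0.
  by move=> rady; exact: (rady Y (fun g n radn => radn Y simY g) idfun).
case: (primeX _ _ i simple_radical_submodule i_inj radY0) => [radX0|trivY].
  exact/radX0/prodM_img.
by case: simY => /(_ trivY).
Qed.

(* For Artinian M, rad(M) lies in every prime M-ideal Ann_M(X): a nonzero
   map M -> X provides a simple submodule of X. *)
Lemma radical_sub_PM m : artinian M -> simple_radical m -> PM m.
Proof.
move=> art radm P [_ [m0 notPm0] [X [primeX PE]]]; apply/PE.
have [f0 f0m0] : exists f0 : {linear M -> X}, f0 m0 <> 0.
  apply: NNPP => none; apply: notPm0; apply/PE => f0.
  by apply: NNPP => h; apply: none; exists f0.
have [Y [i [i_inj simY]]] := artinian_simple_sub art f0m0.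
exact: M_prime_radical primeX i_inj simY m radm.
Qed.

Definition finite_simple_meet (Q : M -> Prop) : Prop :=
  exists n (S : 'I_n -> lmodType R),
    (forall i, simple_mod (S i)) /\ forall m, Q m <-> forall i, AnnM (S i) m.

Lemma finite_simple_meet_submodule Q : finite_simple_meet Q -> submodule Q.
Proof.
move=> [n [S [_ QE]]]; apply: (submodule_ext (fun m => iff_sym (QE m))).
by apply: submodule_meet => i; apply: AnnM_submodule.
Qed.

Lemma finite_simple_meet_cons Q (S : lmodType R) :
  finite_simple_meet Q -> simple_mod S ->
  finite_simple_meet (fun m => Q m /\ AnnM S m).
Proof.
move=> [n [Ss [simSs QE]]] simS.
pose S' (i : 'I_n.+1) := if unlift ord_max i is Some j then Ss j else S.
exists n.+1, S'; split.
  by move=> i; rewrite /S'; case: (unlift ord_max i).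
move=> m; split.
  by move=> [/QE Qm Am] i; rewrite /S'; case: (unlift ord_max i).
move=> AS'; split; last by have := AS' ord_max; rewrite /S' unlift_none.
by apply/QE => j; have := AS' (lift ord_max j); rewrite /S' liftK.
Qed.

(* rad(M) of an Artinian module is a finite intersection of annihilators of
   simple modules: a minimal finite intersection cannot be cut down further. *)
Lemma radical_finite : artinian M ->
  exists n (S : 'I_n -> lmodType R),
    (forall i, simple_mod (S i)) /\
    forall m, simple_radical m <-> forall i, AnnM (S i) m.
Proof.
move=> art.
have meetT : finite_simple_meet (fun _ => True).
  by exists 0%N, (fun _ => M); split=> [[]//|m]; split=> // _ [].
have [Q [meetQ minQ]] :=
  artinian_minimal art finite_simple_meet_submodule meetT.
have [n [S [simS QE]]] := meetQ.
exists n, S; split=> // m; split.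
  by move=> radm i; apply: radm.
move=> /QE Qm S0 simS0.
by have [] := minQ _ (finite_simple_meet_cons meetQ simS0) (fun m h => h.1) m Qm.
Qed.

End Radical.

Theorem theorem5p7 (R : pzRingType) (M : lmodType R) :
  projective_in_sigma M -> artinian M ->
  (forall m : M, PM m) \/
  exists (n : nat) (P : 'I_n -> M -> Prop),
    (forall i, primitive_M_ideal (P i)) /\
    (forall m : M, PM m <-> (forall i, P i m)).
Proof.
move=> _ art; right.
have [n [S [simS radE]]] := radical_finite art.
exists n, (fun i => AnnM (S i)); split=> [i|m]; first exact: AnnM_primitive.
split=> [/PM_sub_radical /radE //|/radE]; exact: radical_sub_PM.
Qed.
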